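(* Let $A\in\mathbb{R}^{n\times n}$ be positive definite with $\operatorname{Tr}(A)=d_1>0$, and let $d_2>0$ be such that for every $x\in\mathbb{R}^n$ and every integer $1\le i\le n$ with $x_1+\cdots+x_i=1$ we have $x^TAx\ge 1/d_2$. Then for every $2$-wise independent family $\mathcal{H}$ from $[n]$ to $\{-1,1\}$, \[\mathbb{E}_{h\in\mathcal{H}}\left[\sup_{1\le i\le n}(h_1+\cdots+h_i)^2\right]\le d_1d_2.\]
   Context: A $k$-wise independent family from $[n]$ to $\{-1,1\}$ is a probability distribution $\mathcal{H}$ over functions $h:[n]\to\{-1,1\}$ such that for any $k$ distinct indices the values $h_{i_1},\dots,h_{i_k}$ (where $h_i:=h(i)$) are independent uniformly random signs; $h$ is viewed as the vector $(h_1,\dots,h_n)\in\mathbb{R}^n$. *)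

From HB Require Import structures.
From mathcomp Require Import all_boot all_order all_algebra.
Set Implicit Arguments. Unset Strict Implicit. Unset Printing Implicit Defensive.
Import Order.TTheory GRing.Theory Num.Theory.
Local Open Scope ring_scope.

(* A sign h_i in {-1,1} is encoded by a boolean: true |-> 1, false |-> -1. *)
Definition sgn {R : ringType} (b : bool) : R := if b then 1 else -1.

Definition is_distribution {R : realFieldType} (n : nat)
  (p : {ffun 'I_n -> bool} -> R) : Prop :=
  (forall h, 0 <= p h) /\ \sum_(h : {ffun 'I_n -> bool}) p h = 1.

Definition kwise_independent {R : realFieldType} (k n : nat)
  (p : {ffun 'I_n -> bool} -> R) : Prop :=
  is_distribution p /\
  forall (s : seq 'I_n) (a : 'I_n -> bool), uniq s -> size s = k ->
    \sum_(h : {ffun 'I_n -> bool} | all (fun i => h i == a i) s) p h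
      = (2 ^+ k)^-1.

Definition pos_def {R : realFieldType} (n : nat) (A : 'M[R]_n) : Prop :=
  A^T = A /\ forall x : 'cV[R]_n, x != 0 -> 0 < (x^T *m A *m x) 0 0.

(* prefix sum x_1 + ... + x_{i+1} (0-based index i) *)
Definition prefix_sum {R : ringType} (n : nat) (x : 'I_n -> R) (i : 'I_n) : R :=
  \sum_(j < n | (j <= i)%N) x j.

(* Put v_h := (h_1, ..., h_n)^T.  For each prefix i with nonzero prefix sum S of
   h, the rescaled vector v_h / S has prefix sum 1, so S^2 <= d2 * v_h^T A v_h;
   hence the supremum is bounded by d2 * v_h^T A v_h.  Pairwise independence
   gives E[h_j h_k] = [j = k], so E[v_h^T A v_h] = Tr A = d1. *)
From HB Require Import structures.
From mathcomp Require Import all_boot all_order all_algebra.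
From mathcomp Require Import ring.
Set Implicit Arguments. Unset Strict Implicit. Unset Printing Implicit Defensive.
Import Order.TTheory GRing.Theory Num.Theory.
Local Open Scope ring_scope.

Lemma quad_formE (R : comRingType) (n : nat) (A : 'M[R]_n) (v : 'cV[R]_n) :
  (v^T *m A *m v) 0 0 = \sum_k \sum_j v j 0 * A j k * v k 0.
Proof.
rewrite mxE; apply: eq_bigr => k _; rewrite mxE big_distrl /=.
by apply: eq_bigr => j _; rewrite mxE.
Qed.

Lemma quad_formZ (R : comRingType) (n : nat) (A : 'M[R]_n) (v : 'cV[R]_n) c :
  ((c *: v)^T *m A *m (c *: v)) 0 0 = c ^+ 2 * (v^T *m A *m v) 0 0.
Proof.
rewrite !quad_formE mulr_sumr; apply: eq_bigr => k _; rewrite mulr_sumr.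
by apply: eq_bigr => j _; rewrite !mxE; ring.
Qed.

Lemma pos_def_quad_form_ge0 (R : realFieldType) (n : nat) (A : 'M[R]_n)
    (v : 'cV[R]_n) :
  pos_def A -> 0 <= (v^T *m A *m v) 0 0.
Proof.
move=> [_ A_pos]; have [->|v_nz] := eqVneq v 0; first by rewrite mulmx0 mxE.
exact/ltW/A_pos.
Qed.

Section PrefixSumBound.

Variables (R : realFieldType) (n : nat) (A : 'M[R]_n) (d2 : R).
Hypothesis A_pd : pos_def A.
Hypothesis d2_gt0 : 0 < d2.
Hypothesis quad_form_prefix1 : forall (x : 'cV[R]_n) (i : 'I_n),
  prefix_sum (fun j => x j 0) i = 1 -> d2^-1 <= (x^T *m A *m x) 0 0.

Lemma quad_form_scaled_ge0 (v : 'cV[R]_n) : 0 <= d2 * (v^T *m A *m v) 0 0.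
Proof. by rewrite mulr_ge0 ?pos_def_quad_form_ge0 // ltW. Qed.

Lemma prefix_sum_sqr_le (v : 'cV[R]_n) (i : 'I_n) :
  (prefix_sum (fun j => v j 0) i) ^+ 2 <= d2 * (v^T *m A *m v) 0 0.
Proof.
set S := prefix_sum _ i.
have [->|S_nz] := eqVneq S 0.
  by rewrite expr0n /= quad_form_scaled_ge0.
have prefix1 : prefix_sum (fun j => (S^-1 *: v) j 0) i = 1.
  rewrite /prefix_sum; under eq_bigr => j _ do rewrite mxE.
  by rewrite -mulr_sumr mulVf.
have S2_gt0 : 0 < S ^+ 2 by rewrite exprn_even_gt0 ?S_nz ?orbT.
have := quad_form_prefix1 prefix1; rewrite quad_formZ exprVn.
by rewrite ler_pdivlMl // ler_pdivrMr // mulrC.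
Qed.

Lemma max_prefix_sum_sqr_le (v : 'cV[R]_n) :
  \big[Num.max/0]_(i < n) (prefix_sum (fun j => v j 0) i) ^+ 2
    <= d2 * (v^T *m A *m v) 0 0.
Proof.
by apply: bigmax_le => [|i _]; rewrite ?quad_form_scaled_ge0 ?prefix_sum_sqr_le.
Qed.

End PrefixSumBound.

Lemma expect_quad_form (R : comRingType) (T : finType) (n : nat)
    (A : 'M[R]_n) (p : T -> R) (v : T -> 'cV[R]_n) :
  (forall j k, \sum_t p t * (v t j 0 * v t k 0) = (j == k)%:R) ->
  \sum_t p t * ((v t)^T *m A *m v t) 0 0 = \tr A.
Proof.
move=> corr.
transitivity (\sum_k \sum_j A j k * \sum_t p t * (v t j 0 * v t k 0)).
  under eq_bigr do rewrite quad_formE mulr_sumr.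
  rewrite exchange_big; apply: eq_bigr => k _.
  under eq_bigr do rewrite mulr_sumr.
  rewrite exchange_big; apply: eq_bigr => j _.
  by rewrite mulr_sumr; apply: eq_bigr => t _; ring.
apply: eq_bigr => k _; rewrite (bigD1 k) //= corr eqxx mulr1 big1 ?addr0 //.
by move=> j /negbTE jk; rewrite corr jk mulr0.
Qed.

Lemma sgn_mul_sgn (R : nzRingType) (b : bool) : sgn b * sgn b = 1 :> R.
Proof. by case: b; rewrite /sgn ?mulr1 ?mulrNN ?mulr1. Qed.

Section PairwiseIndependentSigns.

Variables (R : realFieldType) (n : nat) (p : {ffun 'I_n -> bool} -> R).
Hypothesis p_indep : kwise_independent 2 p.

Lemma kwise2_prob_pair (j k : 'I_n) (b c : bool) : j != k ->
  \sum_(h : {ffun 'I_n -> bool} | (h j, h k) == (b, c)) p h = (2 ^+ 2)^-1.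
Proof.
move=> jk; have jk_uniq : uniq [:: j; k] by rewrite /= inE jk.
rewrite -(p_indep.2 _ (fun i => if i == k then c else b) jk_uniq erefl).
by apply: eq_bigl => h; rewrite /= eqxx (negbTE jk) andbT.
Qed.

Lemma kwise2_sgn_corr (j k : 'I_n) :
  \sum_h p h * (sgn (h j) * sgn (h k)) = (j == k)%:R.
Proof.
have [<-|jk] := eqVneq j k.
  under eq_bigr do rewrite sgn_mul_sgn mulr1.
  by rewrite p_indep.1.2.
rewrite (partition_big (fun h : {ffun _} => (h j, h k)) xpredT) //=.
rewrite (eq_bigr (fun bc => (2 ^+ 2)^-1 * (sgn bc.1 * sgn bc.2))) => [|[b c] _].
  rewrite -(pair_bigA _ (fun b c => (2 ^+ 2)^-1 * (sgn b * sgn c))).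
  by rewrite !big_bool /= /sgn; ring.
rewrite -(kwise2_prob_pair b c jk) mulr_suml.
by apply: eq_bigr => h /eqP [-> ->].
Qed.

End PairwiseIndependentSigns.

Theorem lemma3p1 (R : realFieldType) (n : nat) (A : 'M[R]_n) (d1 d2 : R) :
  pos_def A -> \tr A = d1 -> 0 < d1 -> 0 < d2 ->
  (forall (x : 'cV[R]_n) (i : 'I_n),
      prefix_sum (fun j => x j 0) i = 1 -> d2^-1 <= (x^T *m A *m x) 0 0) ->
  forall p : {ffun 'I_n -> bool} -> R, kwise_independent 2 p ->
  \sum_(h : {ffun 'I_n -> bool})
     p h * \big[Num.max/0]_(i < n) (prefix_sum (fun j => sgn (h j)) i) ^+ 2
   <= d1 * d2.
Proof.
move=> A_pd trA _ d2_gt0 prefix1 p p_indep.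
pose v (h : {ffun 'I_n -> bool}) : 'cV[R]_n := \col_j sgn (h j).
have max_le (h : {ffun _}) :
    \big[Num.max/0]_(i < n) (prefix_sum (fun j => sgn (h j)) i) ^+ 2
      <= d2 * ((v h)^T *m A *m v h) 0 0.
  rewrite (eq_bigr (fun i => (prefix_sum (fun j => v h j 0) i) ^+ 2)).
    exact: max_prefix_sum_sqr_le.
  by move=> i _; congr (_ ^+ 2); apply: eq_bigr => j _; rewrite mxE.
have corr j k : \sum_h p h * (v h j 0 * v h k 0) = (j == k)%:R.
  by under eq_bigr do rewrite !mxE; exact: kwise2_sgn_corr.
apply: le_trans (_ : \sum_h p h * (d2 * ((v h)^T *m A *m v h) 0 0) <= _).
  by apply: ler_sum => h _; rewrite ler_wpM2l ?max_le ?p_indep.1.1.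
under eq_bigr do rewrite mulrCA.
by rewrite -mulr_sumr expect_quad_form // trA mulrC.
Qed.
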